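(* Let $X$ be a non-empty set and let $\mathcal{U}\subseteq P(X)$ be anti-closed under finite intersections. Then $\mathcal{U}$ is anti-closed under arbitrary unions.
   Context: For a family $\mathcal{U}\subseteq P(X)$: $\mathcal{U}$ is anti-closed under finite intersections if for every $n\in\mathbb{N}$ and all $A_1,\dots,A_n\in\mathcal{U}$ that are not all equal, $\bigcap_{i=1}^n A_i\notin\mathcal{U}$; $\mathcal{U}$ is anti-closed under arbitrary intersections if for every non-empty index set $J$ and all $A_i\in\mathcal{U}$ ($i\in J$) not all equal, $\bigcap_{i\in J}A_i\notin\mathcal{U}$; $\mathcal{U}$ is anti-closed under arbitrary unions if for every non-empty index set $J$ and all $A_i\in\mathcal{U}$ ($i\in J$) not all equal, $\bigcup_{i\in J}A_i\notin\mathcal{U}$. *)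

(* subsets of X are predicates X -> Prop; a family is a
   predicate on subsets. Set equality is Leibniz equality of predicates. *)
From Stdlib Require Import Arith.

Definition bigcap_fin {X : Type} (n : nat) (A : nat -> X -> Prop) : X -> Prop :=
  fun x => forall i, i < n -> A i x.

Definition bigcap {X J : Type} (A : J -> X -> Prop) : X -> Prop :=
  fun x => forall i : J, A i x.

Definition bigcup {X J : Type} (A : J -> X -> Prop) : X -> Prop :=
  fun x => exists i : J, A i x.

Definition anti_closed_fin_inter {X : Type} (U : (X -> Prop) -> Prop) : Prop :=
  forall (n : nat) (A : nat -> X -> Prop),
    (forall i, i < n -> U (A i)) ->
    (exists i j, i < n /\ j < n /\ A i <> A j) ->
    ~ U (bigcap_fin n A).

Definition anti_closed_arb_union {X : Type} (U : (X -> Prop) -> Prop) : Prop :=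
  forall (J : Type) (A : J -> X -> Prop),
    inhabited J ->
    (forall i, U (A i)) ->
    (exists i j, A i <> A j) ->
    ~ U (bigcup A).

(** If [A ⊆ B] are both in [U], then [A ∩ B = A] is in [U], so anti-closure under
    binary intersections forces [A = B]. Were [⋃ A_i] in [U], every [A_i] would
    therefore equal it, so the [A_i] would all be equal. *)
From Stdlib Require Import Lia FunctionalExtensionality PropExtensionality Classical.

Definition pair_family {X : Type} (A B : X -> Prop) : nat -> X -> Prop :=
  fun i => if Nat.eqb i 0 then A else B.

Lemma bigcap_fin_pair_family_sub {X : Type} (A B : X -> Prop) :
  (forall x, A x -> B x) -> bigcap_fin 2 (pair_family A B) = A.
Proof.
  intros AB; apply functional_extensionality; intro x.
  apply propositional_extensionality; unfold bigcap_fin, pair_family; split.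
  - intros Hx; exact (Hx 0 ltac:(lia)).
  - intros Ax [|i] _; simpl; auto.
Qed.

Lemma anti_closed_fin_inter_sub_eq {X : Type} (U : (X -> Prop) -> Prop) (A B : X -> Prop) :
  anti_closed_fin_inter U -> U A -> U B -> (forall x, A x -> B x) -> A = B.
Proof.
  intros HU UA UB AB.
  apply NNPP; intros NAB.
  apply (HU 2 (pair_family A B)).
  - intros [|i] _; simpl; assumption.
  - exists 0, 1; simpl; auto.
  - rewrite bigcap_fin_pair_family_sub; assumption.
Qed.

Lemma bigcup_sup {X J : Type} (A : J -> X -> Prop) (k : J) (x : X) :
  A k x -> bigcup A x.
Proof. intros Ax; exists k; exact Ax. Qed.

Theorem mainTheorem4 (X : Type) (hX : inhabited X) (U : (X -> Prop) -> Prop) :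
  anti_closed_fin_inter U -> anti_closed_arb_union U.
Proof.
  intros HU J A _ UA [i [j Aij]] Ucup.
  apply Aij.
  rewrite (anti_closed_fin_inter_sub_eq U _ _ HU (UA i) Ucup (bigcup_sup A i)).
  rewrite (anti_closed_fin_inter_sub_eq U _ _ HU (UA j) Ucup (bigcup_sup A j)).
  reflexivity.
Qed.
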